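(* Given a set of $n_0$ points in $\mathbb{R}^1$, one can maintain a unimax coloring of the current point set with respect to intervals under deletions, using $\lceil\log n_0\rceil$ colors and at the cost of one recoloring per deletion.
   Context: A coloring of a finite point set $P\subset\mathbb{R}$ by integers is unimax with respect to intervals if for every interval $I$ containing at least one point of $P$, the maximum color among the points of $P\cap I$ is attained by exactly one point. A recoloring is a change of color of one remaining point. *)

From HB Require Import structures.
From mathcomp Require Import all_boot all_order all_algebra.
From mathcomp Require Import finmap.
From mathcomp Require Import reals.
Set Implicit Arguments. Unset Strict Implicit. Unset Printing Implicit Defensive.
Import Order.TTheory GRing.Theory Num.Theory.
Local Open Scope fset_scope.

(* A coloring is any map R -> nat; only its values on the current point set
   matter.  Colors are natural numbers (a palette of integers). *)

Definition unimax (R : realType) (S : {fset R}) (c : R -> nat) : Prop :=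
  forall I : interval R, (exists2 x, x \in S & x \in I) ->
    exists x, [/\ x \in S, x \in I &
      forall y, y \in S -> y \in I -> y != x -> (c y < c x)%N].

Definition in_palette (R : realType) (k : nat) (S : {fset R}) (c : R -> nat) :=
  forall x, x \in S -> (1 <= c x <= k)%N.

Definition nrecolor (R : realType) (S : {fset R}) (c c' : R -> nat) : nat :=
  count (fun x => c x != c' x) S.

(* [maintainable k S c]: the current state (S, c) is a unimax coloring with
   palette {1..k}, and for every possible deletion of a point p of S one can
   respond with a coloring c' of S \ {p} differing from c on at most one
   remaining point, from which the same holds again (an online strategy against
   an arbitrary adaptive sequence of deletions). *)
Inductive maintainable (R : realType) (k : nat) : {fset R} -> (R -> nat) -> Prop :=
| Maintain (S : {fset R}) (c : R -> nat) :
    unimax S c -> in_palette k S c ->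
    (forall p, p \in S -> exists c' : R -> nat,
        (nrecolor (S `\ p) c c' <= 1)%N /\ maintainable k (S `\ p) c') ->
    maintainable k S c.

From HB Require Import structures.
From mathcomp Require Import all_boot all_order all_algebra.
From mathcomp Require Import finmap.
From mathcomp Require Import reals.
Set Implicit Arguments. Unset Strict Implicit. Unset Printing Implicit Defensive.
Import Order.TTheory.
Local Open Scope fset_scope.

(* A coloring of a finite set of points on a line is unimax for intervals as
   soon as any two points of equal color are separated by a point of larger
   color.  Coloring the point of rank r by 1 + v_2(r) (the ruler sequence) has
   this property and uses ceil(log2(n0 + 1)) colors.  To delete p, merge it
   into its predecessor q, which takes the color max(c q, c p): merging
   adjacent points and keeping the larger color preserves separation, and only
   q is recolored.  If p has no predecessor, nothing needs to be recolored. *)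

Lemma logn_lt_up_log p r n : (1 < p)%N -> (0 < r <= n)%N ->
  (logn p r < up_log p n.+1)%N.
Proof.
move=> p_gt1 /andP[r_gt0 r_le_n]; rewrite -(ltn_exp2l _ _ p_gt1).
apply: leq_ltn_trans (dvdn_leq r_gt0 (pfactor_dvdnn p r)) _.
by apply: leq_trans (up_logP _ p_gt1); rewrite ltnS.
Qed.

Lemma logn2_between i j : (0 < i < j)%N -> logn 2 i = logn 2 j ->
  exists2 m, (i < m < j)%N & (logn 2 i < logn 2 m)%N.
Proof.
move=> /andP[i_gt0 lt_ij] eq_log.
have [a a_odd def_i] := pfactor_coprime (isT : prime 2) i_gt0.
have [b b_odd def_j] := pfactor_coprime (isT : prime 2) (ltn_trans i_gt0 lt_ij).
rewrite -eq_log in def_j; set e := logn 2 i in def_i def_j *.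
rewrite coprime2n in a_odd; rewrite coprime2n in b_odd.
have e_gt0 : (0 < 2 ^ e)%N by rewrite expn_gt0.
have lt_ab : (a < b)%N by rewrite -(ltn_pmul2r e_gt0) -def_i -def_j.
have lt_a1b : (a.+1 < b)%N.
  by rewrite ltn_neqAle lt_ab andbT; apply: contraTneq b_odd => <-; rewrite /= a_odd.
exists (a.+1 * 2 ^ e)%N; first by rewrite def_i def_j !ltn_pmul2r // ltnSn.
by rewrite -pfactor_dvdn ?muln_gt0 ?e_gt0 // expnS dvdn_pmul2r // dvdn2 /= a_odd.
Qed.

Section Separation.
Variables (d : Order.disp_t) (T : orderType d).
Implicit Types (S : {fset T}) (c : T -> nat) (x y z p q : T).
Local Open Scope order_scope.

Definition rank S x := count (<= x) S.

Lemma rank_gt0 S x : x \in S -> (0 < rank S x)%N.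
Proof. by move=> xS; rewrite -has_count; apply/hasP; exists x => /=. Qed.

Lemma rank_le_card S x : (rank S x <= #|` S|)%N.
Proof. exact: count_size. Qed.

Lemma le_rank S x y : x <= y -> (rank S x <= rank S y)%N.
Proof. by move=> le_xy; apply: sub_count => z /= /le_trans; apply. Qed.

Lemma ltn_rank S x y : y \in S -> (rank S x < rank S y)%N = (x < y).
Proof.
move=> yS; apply/idP/idP => [|lt_xy].
  by apply: contraLR; rewrite -leNgt -leqNgt; apply: le_rank.
rewrite /rank !(permP (perm_to_rem yS)) /= lexx leNgt lt_xy add1n ltnS.
by apply: sub_count => z /= /le_trans; apply; apply: ltW.
Qed.

Lemma rank_onto S m : (0 < m <= #|` S|)%N -> exists2 z, z \in S & rank S z = m.
Proof.
move=> m_range.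
have rank_inj : {in S &, injective (rank S)}.
  move=> x y xS yS eq_r; apply/eqP.
  by rewrite eq_le !leNgt -(ltn_rank y xS) -(ltn_rank x yS) eq_r ltnn.
have sub : {subset map (rank S) S <= iota 1 #|` S|}.
  by move=> _ /mapP[x xS ->]; rewrite mem_iota add1n ltnS rank_gt0 ?rank_le_card.
have uniq_ranks : uniq (map (rank S) S) by rewrite map_inj_in_uniq ?fset_uniq.
have [|_ eq_ranks] := uniq_min_size uniq_ranks sub; first by rewrite size_iota size_map.
have : m \in iota 1 #|` S| by rewrite mem_iota add1n ltnS.
by rewrite -eq_ranks => /mapP[z zS ->]; exists z.
Qed.

Definition separating S c := {in S &, forall x y, x < y -> c x = c y ->
  exists z, [/\ z \in S, x < z, z < y & (c x < c z)%N]}.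

Definition ruler_coloring S x := (logn 2 (rank S x)).+1.

Lemma ruler_separating S : separating S (ruler_coloring S).
Proof.
move=> x y xS yS lt_xy [eq_log].
have [|m /andP[lt_xm lt_my] lt_log] := logn2_between _ eq_log.
  by rewrite rank_gt0 // ltn_rank.
have [|z zS rank_z] := @rank_onto S m.
  by rewrite (leq_ltn_trans _ lt_xm) // (leq_trans (ltnW lt_my)) ?rank_le_card.
exists z; split => //; first by rewrite -(ltn_rank x zS) rank_z.
  by rewrite -(ltn_rank z yS) rank_z.
by rewrite /ruler_coloring ltnS rank_z.
Qed.

Lemma separating_sub S S' c c' : {subset S' <= S} ->
  {in S' &, forall x y, {in S, forall z, x < z < y -> z \in S'}} ->
  {in S', c' =1 c} -> separating S c -> separating S' c'.
Proof.
move=> sub_S' convex_S' eq_c sepS x y xS' yS' lt_xy.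
rewrite !eq_c // => eq_cxy.
have [z [zS lt_xz lt_zy lt_c]] := sepS x y (sub_S' x xS') (sub_S' y yS') lt_xy eq_cxy.
have zS' : z \in S' by apply: (convex_S' x y xS' yS' z zS); rewrite lt_xz.
by exists z; rewrite !eq_c.
Qed.

Lemma separating_merge S S' c c' (f : T -> T) : separating S c ->
  {in S &, {homo f : x y / x <= y}} ->
  {in S, forall x, f x \in S' /\ (c x <= c' (f x))%N} ->
  {in S', forall y, exists2 x, x \in S & f x = y /\ c x = c' y} ->
  separating S' c'.
Proof.
move=> sepS f_homo f_into f_onto x y xS' yS' lt_xy eq_c.
have [x0 x0S [fx0 cx0]] := f_onto x xS'.
have [y0 y0S [fy0 cy0]] := f_onto y yS'.
have lt_x0y0 : x0 < y0.
  by rewrite ltNge; apply/negP => /(f_homo _ _ y0S x0S); rewrite fx0 fy0 leNgt lt_xy.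
have [|z [zS lt_x0z lt_zy0 lt_c]] := sepS x0 y0 x0S y0S lt_x0y0.
  by rewrite cx0 cy0.
have [fzS' le_c] := f_into z zS.
have lt_cfz : (c' x < c' (f z))%N by rewrite -cx0 (leq_trans lt_c le_c).
exists (f z); split => //; rewrite lt_neqAle; apply/andP; split.
- by apply: contraTneq lt_cfz => ->; rewrite ltnn.
- by rewrite -fx0 f_homo // ltW.
- by apply: contraTneq lt_cfz => ->; rewrite eq_c ltnn.
- by rewrite -fy0 f_homo // ltW.
Qed.

Lemma rank_predecessor S p : p \in S -> rank S p != 1%N ->
  exists q, [/\ q \in S, q < p & {in S, forall x, x < p -> x <= q}].
Proof.
move=> pS rank_p_neq1.
have rank_p_gt1 : (1 < rank S p)%N by rewrite ltn_neqAle eq_sym rank_p_neq1 rank_gt0.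
have [|q qS rank_q] := @rank_onto S (rank S p).-1.
  by rewrite ltn_predRL rank_p_gt1 (leq_trans (leq_pred _)) ?rank_le_card.
exists q; split => //; first by rewrite -(ltn_rank q pS) rank_q ltn_predL ltnW.
move=> x xS lt_xp; rewrite leNgt -(ltn_rank q xS) rank_q -leqNgt.
by rewrite -ltnS (ltn_predK rank_p_gt1) ltn_rank.
Qed.

(* For a minimal p the witness is q = p, so that the coloring is unchanged on S `\ p. *)
Lemma separating_fsetD1 S c p : separating S c -> p \in S ->
  exists2 q, q \in S &
    separating (S `\ p) (fun x => if x == q then maxn (c q) (c p) else c x).
Proof.
move=> sepS pS; have [rank_p|rank_p] := eqVneq (rank S p) 1%N.
  have p_min : {in S, forall x, p <= x}.
    by move=> x xS; rewrite leNgt -(ltn_rank x pS) rank_p ltnS leqn0 -lt0n rank_gt0.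
  exists p => //; apply: separating_sub sepS.
  - by move=> x /fsetD1P[].
  - move=> x y /fsetD1P[_ xS] _ z zS /andP[lt_xz _].
    by rewrite in_fsetD1 zS andbT gt_eqF // (le_lt_trans (p_min x xS)).
  - by move=> x /fsetD1P[/negPf ->].
have [q [qS lt_qp q_max]] := rank_predecessor pS rank_p.
exists q => //; apply: (separating_merge (f := fun x => if x == p then q else x) sepS).
- move=> x y xS yS le_xy.
  case: (eqVneq x p) => [eq_xp|neq_xp]; case: (eqVneq y p) => [eq_yp|neq_yp] //.
  + by rewrite eq_xp in le_xy; apply: le_trans (ltW lt_qp) le_xy.
  + by apply: q_max; rewrite // lt_neqAle neq_xp -eq_yp.
- move=> x xS; case: (eqVneq x p) => [->|neq_xp]; split.
  + by rewrite in_fsetD1 qS andbT lt_eqF.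
  + by rewrite eqxx leq_maxr.
  + by rewrite in_fsetD1 neq_xp.
  + by case: eqP => [->|_]; rewrite ?leq_maxl.
- move=> y /fsetD1P[neq_yp yS]; case: (eqVneq y q) => [->|neq_yq].
  + have [le_pq|lt_qp'] := leqP (c p) (c q).
      by exists q; rewrite ?lt_eqF ?eqxx ?(maxn_idPl le_pq).
    by exists p; rewrite ?eqxx ?(maxn_idPr (ltnW lt_qp')).
  + by exists y; rewrite ?(negPf neq_yp) ?(negPf neq_yq).
Qed.

Lemma mem_itv_between (I : interval T) x y z :
  x \in I -> y \in I -> x <= z <= y -> z \in I.
Proof.
case: I => bl br; rewrite !itv_boundlr => /andP[le_blx _] /andP[_ le_ybr].
by case/andP=> le_xz le_zy; rewrite (le_trans le_blx) ?(le_trans _ le_ybr) ?bnd_simp.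
Qed.

End Separation.

Section RealLine.
Variable R : realType.
Implicit Types (S : {fset R}) (c : R -> nat).
Local Open Scope order_scope.

Lemma separating_unimax S c : separating S c -> unimax S c.
Proof.
move=> sepS I [x0 x0S x0I].
case: (@arg_maxnP _ [` x0S] (fun y : S => val y \in I) (fun y : S => c (val y)) x0I)
  => m mI max_m.
have below_max a b : a \in S -> b \in S -> a \in I -> b \in I -> a < b -> c a = c b ->
    (c a < c (val m))%N.
  move=> aS bS aI bI lt_ab eq_c.
  have [z [zS lt_az lt_zb lt_c]] := sepS a b aS bS lt_ab eq_c.
  have zI : z \in I by apply: (mem_itv_between aI bI); rewrite !ltW.
  exact: leq_trans lt_c (max_m [` zS] zI).
exists (val m); split => // [|y yS yI neq_ym]; first exact: valP.
have := max_m [` yS] yI; rewrite /= leq_eqVlt => /orP[/eqP eq_c|//].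
have mS : val m \in S := valP m.
have [lt_ym|lt_my|eq_ym] := ltgtP y (val m); last by rewrite eq_ym eqxx in neq_ym.
  exact: below_max yS mS yI mI lt_ym eq_c.
by have := below_max _ _ mS yS mI yI lt_my (esym eq_c); rewrite ltnn.
Qed.

Lemma nrecolor_le1 S c c' q : (forall x, x != q -> c' x = c x) ->
  (nrecolor S c c' <= 1)%N.
Proof.
move=> eq_off_q; apply: leq_trans (sub_count (a2 := pred1 q) _ _) _.
  by move=> x /=; apply: contraR => /eq_off_q ->.
by rewrite count_uniq_mem ?fset_uniq ?leq_b1.
Qed.

Lemma ruler_palette S : in_palette (up_log 2 (#|` S|).+1) S (ruler_coloring S).
Proof.
by move=> x xS; rewrite ltnS logn_lt_up_log // rank_gt0 ?rank_le_card.
Qed.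

Lemma separating_delete k S c p : separating S c -> in_palette k S c -> p \in S ->
  exists c', [/\ (nrecolor (S `\ p) c c' <= 1)%N,
                 separating (S `\ p) c' & in_palette k (S `\ p) c'].
Proof.
move=> sepS palS pS; have [q qS sep'] := separating_fsetD1 sepS pS.
exists (fun x => if x == q then maxn (c q) (c p) else c x); split => //.
  by apply: (@nrecolor_le1 _ _ _ q) => x /negPf ->.
move=> x /fsetD1P[_ xS]; case: eqP => _; last exact: palS.
have /andP[cq_ge1 cq_le] := palS q qS; have /andP[_ cp_le] := palS p pS.
by rewrite leq_max cq_ge1 geq_max cq_le cp_le.
Qed.

Lemma separating_maintainable k S c :
  separating S c -> in_palette k S c -> maintainable k S c.
Proof.
have [n lt_S] := ubnP #|` S|; elim: n S c lt_S => // n IH S c lt_S sepS palS.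
constructor => //; first exact: separating_unimax.
move=> p pS; have [c' [one_recolor sep' pal']] := separating_delete sepS palS pS.
exists c'; split => //; apply: IH => //.
by move: lt_S; rewrite (cardfsD1 p) pS add1n ltnS.
Qed.

End RealLine.

Theorem mainTheorem12 (R : realType) (P0 : {fset R}) :
  exists c0 : R -> nat, maintainable (up_log 2 (#|` P0|).+1) P0 c0.
Proof.
exists (ruler_coloring P0).
by apply: separating_maintainable; [apply: ruler_separating | apply: ruler_palette].
Qed.
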